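(* In the setting below, suppose $p\geq5$. Then for all distinct $i,j,k\in\mathbb Z/N\mathbb Z$ we have $\#(P_{ij}\cap P_{jk})\geq2$.
   Context: Setting: $p,q$ distinct primes, $N=p+q$; $M=(m_{ik})_{i,k\in\mathbb Z/N\mathbb Z}$ has entries in $\mathbb Z/pq\mathbb Z$ and $(e^{2\pi i\,m_{ik}/pq})$ is a complex Hadamard matrix (unimodular entries, orthogonal rows). $L_i(k)=m_{ik}$, $L_{ij}=L_j-L_i$. For $d\mid pq$, $d(\mathbb Z/pq\mathbb Z)$ is the subgroup of multiples of $d$. For distinct $i,j$ there is a partition $\mathbb Z/N\mathbb Z=P_{ij}\sqcup Q_{ij}\sqcup R_{ij}$ and $r\in\mathbb Z/pq\mathbb Z$ with: $\#R_{ij}=2$ and $L_{ij}\equiv r$ on $R_{ij}$; $\#P_{ij}=p-1$ and $L_{ij}(P_{ij})=(r+q(\mathbb Z/pq\mathbb Z))\setminus\{r\}$; $\#Q_{ij}=q-1$ and $L_{ij}(Q_{ij})=(r+p(\mathbb Z/pq\mathbb Z))\setminus\{r\}$. This partition is unique ($R_{ij}$ is the pair of indices where $L_{ij}$ takes its unique repeated value). Put $P^+_{ij}=P_{ij}\cup R_{ij}$, $Q^+_{ij}=Q_{ij}\cup R_{ij}$. *)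

From HB Require Import structures.
From mathcomp Require Import all_boot all_order all_algebra all_field.
Set Implicit Arguments. Unset Strict Implicit. Unset Printing Implicit Defensive.
Import Order.TTheory GRing.Theory Num.Theory.
Local Open Scope ring_scope.

(* Indices Z/NZ with N = p + q are represented by 'I_(p+q); entries of M live
   in 'Z_(p*q) (p*q >= 6, so 'Z_(p*q) really is Z/pqZ). *)

Definition multiples (n d : nat) : {set 'Z_n} :=
  [set (d%:R * y) | y in 'Z_n].

(* (e^{2 pi i m_ik / pq}) is a complex Hadamard matrix, where z plays the role
   of exp(2 pi i / pq): a primitive pq-th root of unity in algC.  Entries are
   z^(m_ik) (automatically unimodular); rows are pairwise orthogonal for the
   standard Hermitian inner product. *)
Definition hadamard_log (n N : nat) (z : algC) (M : 'M['Z_n]_N) : Prop :=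
  forall i i' : 'I_N, i != i' ->
    \sum_(k < N) z ^+ (M i k : nat) * (z ^+ (M i' k : nat))^* = 0.

Definition Ldiff (n N : nat) (M : 'M['Z_n]_N) (i j : 'I_N) (k : 'I_N) : 'Z_n :=
  M j k - M i k.

Definition PQR_partition (p q : nat) (M : 'M['Z_(p * q)]_(p + q)) (i j : 'I_(p + q))
    (P Q R : {set 'I_(p + q)}) (r : 'Z_(p * q)) : Prop :=
  (P :|: Q :|: R = setT /\ [disjoint P & Q] /\ [disjoint P & R] /\ [disjoint Q & R]) /\
  (#|R| = 2%N /\ (forall k, k \in R -> Ldiff M i j k = r)) /\
  (#|P| = p.-1 /\ [set Ldiff M i j k | k in P] = [set r + x | x in multiples (p * q) q] :\ r) /\
  (#|Q| = q.-1 /\ [set Ldiff M i j k | k in Q] = [set r + x | x in multiples (p * q) p] :\ r).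

From HB Require Import structures.
From mathcomp Require Import all_boot all_order all_algebra all_field.
From mathcomp Require Import zify ring.
Set Implicit Arguments. Unset Strict Implicit. Unset Printing Implicit Defensive.
Import Order.TTheory GRing.Theory Num.Theory.
Local Open Scope ring_scope.

(* Orthogonality of rows i, j says that the p + q roots of
      unity z^(L_ij(x)) sum to 0.  Averaging over the Galois group of Q(z)
      turns this into identities on Ramanujan sums, i.e. linear relations
      between the numbers of x with L_ij(x) in a given class mod p, mod q and
      mod pq.  These relations force a rigid "profile": one class a0 mod p is
      hit q + 1 times, the other classes once; likewise one class b0 mod q is
      hit p + 1 times; and the class (a, b) mod pq is hit [a = a0] + [b = b0]
      times.
   2. Additivity.  Since L_ik = L_ij + L_jk, summing residues shows that the
      exceptional classes mod p satisfy a_ik = a_ij + a_jk.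
   3. The p - 1 indices outside the exceptional class of L_ij mod p lie in
      P_ij (Q_ij ∪ R_ij is contained in that class).  At most two of them can
      leave the corresponding set for L_jk: on such indices L_jk is constant
      both mod p and mod q, and the profile allows at most two of those.
      Hence #|P_ij ∩ P_jk| >= p - 3 >= 2. *)

Definition mod_profile (m c N : nat) (f : 'I_N -> nat) (a0 : nat) : Prop :=
  forall a, #|[set x | f x == a %[mod m]]| = (1 + c * (a == a0 %[mod m]))%N.

Definition crt_profile (p q N : nat) (f : 'I_N -> nat) (a0 b0 : nat) : Prop :=
  forall a b, #|[set x | (f x == a %[mod p]) && (f x == b %[mod q])]| =
    ((a == a0 %[mod p]) + (b == b0 %[mod q]))%N.

Definition off_class (p N : nat) (f : 'I_N -> nat) (a0 : nat) : {set 'I_N} :=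
  [set x | ~~ (f x == a0 %[mod p])].

Lemma geom_sum_root (w : algC) (m : nat) : w ^+ m = 1 ->
  \sum_(t < m) w ^+ t = (w == 1)%:R * m%:R.
Proof.
move=> wm; have [->|w1] := eqVneq w 1.
  by rewrite mul1r (eq_bigr (fun _ => 1)) ?sumr_const ?card_ord // => t _; rewrite expr1n.
rewrite mul0r; apply/eqP; have : (w - 1) * \sum_(t < m) w ^+ t == 0.
  by rewrite -subrX1 wm subrr.
by rewrite mulf_eq0 subr_eq0 (negbTE w1).
Qed.

Lemma sum_multiples (d m : nat) (F : nat -> algC) : (0 < d)%N ->
  \sum_(k < d * m) (d %| k)%N%:R * F k = \sum_(t < m) F (d * t)%N.
Proof.
move=> d0; rewrite -(big_mkord xpredT (fun k => (d %| k)%N%:R * F k)).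
rewrite -(big_mkord xpredT (fun t => F (d * t)%N)).
elim: m => [|m IH]; first by rewrite muln0 !big_geq.
rewrite big_nat_recr //= -IH mulnS addnC (big_cat_nat _ (leq_addr _ _)) //=.
congr (_ + _); rewrite big_ltn; last by rewrite -addn1 leq_add2l.
rewrite (dvdn_mulr _ (dvdnn d)) mul1r big1_seq ?addr0 //.
move=> k /andP [_]; rewrite mem_index_iota => /andP [k_lb k_ub].
case: (boolP (d %| k)%N) => [/dvdnP [c kc]|]; last by rewrite mul0r.
by move: k_lb k_ub; rewrite kc (mulnC c d) -mulnSr !ltn_pmul2l //; lia.
Qed.

Section RootSums.

Variables (z : algC) (n : nat).
Hypothesis z_prim : n.-primitive_root z.

Lemma sum_multiples_pow (d m g : nat) : n = (d * m)%N -> (0 < d)%N ->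
  \sum_(k < n) (d %| k)%N%:R * z ^+ (k * g) = (m %| g)%N%:R * m%:R.
Proof.
move=> n_dm d0; move: z_prim; rewrite n_dm => hz.
rewrite (@sum_multiples d m (fun k => z ^+ (k * g))) //.
rewrite (eq_bigr (fun t : 'I_m => (z ^+ (d * g)) ^+ t)); last first.
  by move=> t _; rewrite -exprM; congr (_ ^+ _); rewrite mulnAC.
rewrite geom_sum_root; last first.
  by rewrite -exprM -mulnA (mulnC g) mulnA exprM (prim_expr_order hz) expr1n.
have m0 : (0 < m)%N by move: (prim_order_gt0 hz); rewrite muln_gt0 => /andP[].
by rewrite -(prim_order_dvd hz) dvdn_pmul2l.
Qed.

(* Galois averaging: if the powers z^(f x) sum to zero, so do their images
   under every automorphism z |-> z^k (k coprime to n), multiplied by any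
   fixed power z^(k h). *)
Lemma vanishing_sum_galois (N : nat) (f : 'I_N -> nat) (h : nat) :
  \sum_(x < N) z ^+ (f x) = 0 ->
  \sum_(x < N) \sum_(k < n) (coprime k n)%:R * z ^+ (k * (f x + h)) = 0.
Proof.
move=> sum0; rewrite exchange_big /= big1 // => k _.
case: (boolP (coprime k n)) => ck; last by rewrite big1 // => x _; rewrite mul0r.
have [u hu] := Qn_aut_exists ck.
have uz : u z = z ^+ k by apply: hu; apply: prim_expr_order.
rewrite (eq_bigr (fun x => z ^+ (k * h) * u (z ^+ f x))); last first.
  by move=> x _; rewrite mul1r rmorphXn /= uz -!exprM -exprD mulnDr addnC.
by rewrite -mulr_sumr -rmorph_sum sum0 rmorph0 mulr0.
Qed.

End RootSums.

(* The Ramanujan sum c_pq(g), by inclusion-exclusion over the multiples of p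
   and of q. *)
Lemma ramanujan_sum_pq (p q : nat) (z : algC) (g : nat) :
  prime p -> prime q -> p != q -> (p * q)%N.-primitive_root z ->
  \sum_(k < p * q) (coprime k (p * q))%:R * z ^+ (k * g) =
   (p * q %| g)%N%:R * (p * q)%N%:R - (q %| g)%N%:R * q%:R - (p %| g)%N%:R * p%:R + 1.
Proof.
move=> pp pq hpq hz; have p0 := prime_gt0 pp; have q0 := prime_gt0 pq.
have n0 : (0 < p * q)%N by rewrite muln_gt0 p0.
have cpq : coprime p q by rewrite prime_coprime // dvdn_prime2.
have zero_iff k : (k < p * q)%N -> (k == 0%N) = (p %| k)%N && (q %| k)%N.
  move=> kn; rewrite -Gauss_dvd //; apply/eqP/idP => [->|]; first by rewrite dvdn0.
  case: (posnP k) => // kp /(dvdn_leq kp); by rewrite leqNgt kn.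
have incl_excl k : (k < p * q)%N -> (coprime k (p * q))%:R * z ^+ (k * g) =
   z ^+ (k * g) - (p %| k)%N%:R * z ^+ (k * g) - (q %| k)%N%:R * z ^+ (k * g)
   + (k == 0%N)%:R * z ^+ (k * g).
  move=> kn; rewrite coprimeMr ![coprime k _]coprime_sym !prime_coprime // zero_iff //.
  by case: (p %| k)%N; case: (q %| k)%N; rewrite /= ?mul1r ?mul0r; ring.
rewrite (eq_bigr _ (fun (k : 'I_(p * q)) _ => incl_excl k (ltn_ord k))) big_split /= !sumrB.
rewrite (@sum_multiples_pow z (p * q) hz p q g) //.
rewrite (@sum_multiples_pow z (p * q) hz q p g (mulnC p q)) //.
have -> : \sum_(k < p * q) (k == 0%N :> nat)%:R * z ^+ (k * g) = 1.
  rewrite (bigD1 (Ordinal n0)) //= mul1r mul0n expr0 big1 ?addr0 //.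
  move=> k /eqP kn; case: (@eqP nat k 0%N) => [k0|]; last by rewrite mul0r.
  by case: kn; apply: val_inj.
rewrite (eq_bigr (fun k : 'I_(p * q) => (z ^+ g) ^+ k)); last by move=> k _; rewrite -exprM mulnC.
rewrite geom_sum_root; last by rewrite -exprM mulnC exprM (prim_expr_order hz) expr1n.
by rewrite (prim_order_dvd hz).
Qed.

Lemma sum_indicator_card (N : nat) (P : pred 'I_N) :
  (\sum_(x < N) (P x : nat))%N = #|[set x | P x]|.
Proof.
rewrite -sum1_card [RHS]big_mkcond /=; apply: eq_bigr => x _; rewrite inE; by case: (P x).
Qed.

Lemma sum_residue_counts (p N : nat) (f : 'I_N -> nat) : (0 < p)%N ->
  (\sum_(g < p) #|[set x | f x == g %[mod p]]| = N)%N.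
Proof.
move=> p0; rewrite (eq_bigr (fun g : 'I_p => \sum_(x < N) (f x == g %[mod p]) : nat)%N).
  rewrite exchange_big /= -[RHS]card_ord -sum1_card; apply: eq_bigr => x _.
  have fp : (f x %% p < p)%N by rewrite ltn_pmod.
  rewrite (bigD1 (Ordinal fp)) //= modn_mod eqxx big1 // => g /eqP gne.
  by case: eqP => // h; case: gne; apply: val_inj => /=; rewrite h modn_small.
by move=> g _; rewrite sum_indicator_card.
Qed.

(* The linear relation between the class counts of a vanishing sum of
   pq-th roots of unity: apply Galois averaging with the shift h = -g and
   evaluate the resulting Ramanujan sums. *)
Lemma vanishing_class_counts (p q N : nat) (z : algC) (f : 'I_N -> nat) (g : nat) :
  prime p -> prime q -> p != q -> (p * q)%N.-primitive_root z ->
  \sum_(x < N) z ^+ (f x) = 0 ->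
  ((p * q) * #|[set x | f x == g %[mod p * q]]| + N =
    q * #|[set x | f x == g %[mod q]]| + p * #|[set x | f x == g %[mod p]]|)%N.
Proof.
move=> pp pq hpq hz sum0.
have n0 : (0 < p * q)%N by rewrite muln_gt0 !prime_gt0.
have shift d : (d %| p * q)%N -> forall y,
    (d %| y + (p * q - g %% (p * q)))%N = (y == g %[mod d]).
  move=> /dvdnP [c nc] y; rewrite /dvdn -(mod0n d) -(eqn_modDr (g %% (p * q))) -addnA.
  rewrite subnK; last by apply: ltnW; rewrite ltn_pmod.
  by rewrite add0n modn_dvdm ?nc ?dvdn_mull // addnC modnMDl.
have := vanishing_sum_galois hz (p * q - g %% (p * q)) sum0.
rewrite (eq_bigr (fun x => ((f x == g %[mod p * q])%:R * (p * q)%N%:R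
   - (f x == g %[mod q])%:R * q%:R - (f x == g %[mod p])%:R * p%:R + 1))); last first.
  by move=> x _; rewrite ramanujan_sum_pq // !shift // ?(dvdn_mulr _ (dvdnn _), dvdn_mull _ (dvdnn _)).
rewrite big_split /= !sumrB -!mulr_suml -!natr_sum !sum_indicator_card sumr_const card_ord.
move=> rel; apply/eqP; rewrite -(@eqr_nat algC) !natrD !natrM -subr_eq0.
by apply/eqP; rewrite -rel; ring.
Qed.

(* Read modulo q, the class-count relation forces every class count A modulo
   p to be positive and congruent to 1 modulo q. *)
Lemma class_count_mod (p q D A B : nat) : prime p -> prime q -> p != q ->
  (p * q * D + (p + q) = q * B + p * A)%N -> (0 < A)%N /\ (q %| A - 1)%N.
Proof.
move=> pp pq hpq rel.
have pA : (p * A == p %[mod q])%N.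
  have := congr1 (modn^~ q) rel; rewrite /= (mulnC q B) modnMDl => <-.
  by rewrite (_ : p * q * D + (p + q) = (p * D + 1) * q + p)%N ?modnMDl //; ring.
case: (posnP A) => [A0|Apos].
  move: pA; rewrite A0 muln0 mod0n eq_sym -/(dvdn q p) dvdn_prime2 //.
  by rewrite eq_sym (negbTE hpq).
split => //; move: pA; rewrite eqn_mod_dvd; last by rewrite leq_pmulr.
by rewrite -{2}(muln1 p) -mulnBr Gauss_dvdr // prime_coprime // dvdn_prime2 // eq_sym.
Qed.

Lemma unique_large_count (m c : nat) (C : nat -> nat) : (0 < c)%N ->
  (\sum_(g < m) C g = m + c)%N ->
  (forall g, (g < m)%N -> (0 < C g)%N /\ (c %| C g - 1)%N) ->
  exists2 g0, (g0 < m)%N & (C g0 = c + 1 /\ forall g, (g < m)%N -> g != g0 -> C g = 1)%N.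
Proof.
move=> c0 total hC.
case: (pickP (fun g : 'I_m => 1 < C g)%N) => [g0 big_g0|all_small]; last first.
  have : (\sum_(g < m) C g <= \sum_(g < m) 1)%N.
    by apply: leq_sum => g _; move: (all_small g) => /= /negbT; rewrite -leqNgt.
  by rewrite total sum1_card card_ord; lia.
exists g0 => //.
have [_ dv] := hC g0 (ltn_ord g0).
have c_le : (c <= C g0 - 1)%N by apply: dvdn_leq => //; lia.
have others : (\sum_(g < m | g != g0) C g = \sum_(g < m | g != g0) (C g - 1) + (m - 1))%N.
  have -> : (m - 1 = \sum_(g < m | g != g0) 1)%N.
    rewrite sum1dep_card (_ : [set x | x != g0] = [set~ g0]) ?cardsC1 ?card_ord ?subn1 //.
    by apply/setP => x; rewrite !inE.
  rewrite -big_split /=; apply: eq_bigr => g _; have [+ _] := hC g (ltn_ord g); lia.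
move: total; rewrite (bigD1 g0) //= others => total.
have excess0 : (\sum_(g < m | g != g0) (C g - 1) = 0)%N by lia.
split; first by lia.
move=> g gm gne; move/eqP: excess0; rewrite sum_nat_eq0 => /forallP /(_ (Ordinal gm)) /=.
have -> : Ordinal gm != g0 by apply: contra gne => /eqP <-.
by have [+ _] := hC g gm; move=> ? /eqP; lia.
Qed.

Section VanishingProfile.

Variables (p q N : nat) (z : algC) (f : 'I_N -> nat).
Hypotheses (pp : prime p) (pq : prime q) (hpq : p != q) (hN : N = (p + q)%N).
Hypotheses (hz : (p * q)%N.-primitive_root z) (sum0 : \sum_(x < N) z ^+ (f x) = 0).

Lemma vanishing_mod_profile : exists a0, mod_profile p q f a0.
Proof.
have p0 := prime_gt0 pp; have q0 := prime_gt0 pq.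
have total : (\sum_(g < p) #|[set x | f x == g %[mod p]]| = p + q)%N.
  by rewrite -hN sum_residue_counts.
have counts g : (g < p)%N -> (0 < #|[set x | f x == g %[mod p]]|)%N /\
    (q %| #|[set x | f x == g %[mod p]]| - 1)%N.
  move=> _; have rel := vanishing_class_counts g pp pq hpq hz sum0.
  exact: class_count_mod pp pq hpq (etrans (congr1 (addn _) (esym hN)) rel).
have [a0 a0p [Ca0 Cg]] := unique_large_count q0 total counts.
exists a0 => a; rewrite (_ : #|_| = #|[set x | f x == a %% p %[mod p]]|); last first.
  by apply: eq_card => x; rewrite !inE modn_mod.
rewrite -(modn_small a0p) -[X in X == _]modn_mod; case: (eqVneq (a %% p)%N a0) => [->|ne].
  by rewrite Ca0 modn_mod eqxx; lia.
by rewrite Cg ?ltn_pmod // !modn_mod (modn_small a0p) (negbTE ne) muln0.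
Qed.

(* Combining the profiles modulo p and modulo q through the class-count
   relation at a CRT lift of (a, b) gives the joint profile. *)
Lemma vanishing_crt_profile (a0 b0 : nat) :
  mod_profile p q f a0 -> mod_profile q p f b0 -> crt_profile p q f a0 b0.
Proof.
move=> Hp Hq a b; have cpq : coprime p q by rewrite prime_coprime // dvdn_prime2.
set g := chinese p q a b.
have -> : [set x | (f x == a %[mod p]) && (f x == b %[mod q])] = [set x | f x == g %[mod p * q]].
  by apply/setP => x; rewrite !inE chinese_remainder // /g chinese_modl // chinese_modr.
have := vanishing_class_counts g pp pq hpq hz sum0.
rewrite Hp Hq /g chinese_modl // chinese_modr //.
set X := #|_|; set eb := nat_of_bool _; set ea := nat_of_bool _; rewrite hN.
have -> : (q * (1 + p * eb) + p * (1 + q * ea) = p * q * (ea + eb) + (p + q))%N by ring.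
by move/addIn/eqP; rewrite eqn_pmul2l ?muln_gt0 ?prime_gt0 // => /eqP.
Qed.

End VanishingProfile.

Lemma vanishing_profile (p q N : nat) (z : algC) (f : 'I_N -> nat) :
  prime p -> prime q -> p != q -> N = (p + q)%N -> (p * q)%N.-primitive_root z ->
  \sum_(x < N) z ^+ (f x) = 0 ->
  exists a0 b0, mod_profile p q f a0 /\ crt_profile p q f a0 b0.
Proof.
move=> pp pq hpq hN hz sum0.
have [a0 Hp] := vanishing_mod_profile pp pq hpq hN hz sum0.
have hqp : q != p by rewrite eq_sym.
have hz' : (q * p)%N.-primitive_root z by rewrite mulnC.
have [b0 Hq] := vanishing_mod_profile pq pp hqp (etrans hN (addnC p q)) hz' sum0.
by exists a0, b0; split; last exact: (vanishing_crt_profile pp pq hpq hN hz sum0 Hp Hq).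
Qed.

Lemma residue_as_sum (p y : nat) : (0 < p)%N ->
  (\sum_(a < p) a * (y == a %[mod p]) = y %% p)%N.
Proof.
move=> p0; have yp : (y %% p < p)%N by rewrite ltn_pmod.
rewrite (bigD1 (Ordinal yp)) //= modn_mod eqxx muln1 big1 ?addn0 // => a /eqP ne.
case: eqP => ya; last by rewrite muln0.
by case: ne; apply: val_inj => /=; rewrite ya modn_small.
Qed.

(* For an odd prime p, a family with a mod-p profile of exceptional class a0
   sums to c a0 modulo p: the classes hit once contribute 0 + 1 + ... + (p-1),
   which is divisible by p. *)
Lemma profile_sum_mod (p c N : nat) (f : 'I_N -> nat) (a0 : nat) :
  prime p -> (2 < p)%N -> mod_profile p c f a0 ->
  (\sum_(x < N) f x == c * a0 %[mod p])%N.
Proof.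
move=> pp p2 prof; have p0 := prime_gt0 pp.
rewrite -modn_summ (eq_bigr (fun x => \sum_(a < p) a * (f x == a %[mod p]))%N); last first.
  by move=> x _; rewrite residue_as_sum.
rewrite exchange_big /= (eq_bigr (fun a : 'I_p => a + c * (a * (a0 == a %[mod p])))%N).
  rewrite big_split /= -big_distrr /= residue_as_sum //.
  have /dvdnP [k ->] : (p %| \sum_(a < p) a)%N.
    by rewrite -(big_mkord xpredT (fun a => a)) bin2_sum prime_dvd_bin.
  by rewrite modnMDl modnMmr.
move=> a _; rewrite -big_distrr /= sum_indicator_card prof.
by rewrite mulnDr muln1 mulnCA eq_sym.
Qed.

Lemma eqn_mod_mul2l (p c a b : nat) : coprime p c ->
  (c * a == c * b %[mod p])%N = (a == b %[mod p])%N.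
Proof.
move=> cpc; wlog le_ba : a b / (b <= a)%N.
  move=> W; case: (leqP b a) => h; first exact: W.
  by rewrite eq_sym [in RHS]eq_sym; apply: W; apply: ltnW.
by rewrite !eqn_mod_dvd ?leq_mul2l ?le_ba ?orbT // -mulnBr Gauss_dvdr.
Qed.

Lemma exceptional_class_add (p c N : nat) (f1 f2 f3 : 'I_N -> nat) (a1 a2 a3 : nat) :
  prime p -> (2 < p)%N -> coprime p c ->
  (forall x, f3 x == f1 x + f2 x %[mod p])%N ->
  mod_profile p c f1 a1 -> mod_profile p c f2 a2 -> mod_profile p c f3 a3 ->
  (a3 == a1 + a2 %[mod p])%N.
Proof.
move=> pp p2 cpc add prof1 prof2 prof3.
rewrite -(eqn_mod_mul2l _ _ cpc) -(eqP (profile_sum_mod pp p2 prof3)) mulnDr -modnDm.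
rewrite -(eqP (profile_sum_mod pp p2 prof1)) -(eqP (profile_sum_mod pp p2 prof2)).
rewrite modnDm -big_split /= -modn_summ -[in X in _ == X]modn_summ.
by rewrite (eq_bigr (fun x => (f1 x + f2 x) %% p)%N) // => x _; apply/eqP.
Qed.

Lemma crt_profile_cover (p q N : nat) (f : 'I_N -> nat) (a0 b0 : nat) :
  crt_profile p q f a0 b0 -> forall x, (f x == a0 %[mod p])%N || (f x == b0 %[mod q])%N.
Proof.
move=> prof x.
have : (0 < #|[set y | (f y == f x %[mod p]) && (f y == f x %[mod q])]|)%N.
  by apply/card_gt0P; exists x; rewrite inE !eqxx.
by rewrite prof; case: (f x == a0 %[mod p])%N; case: (f x == b0 %[mod q])%N.
Qed.

Lemma card_off_class (p c N : nat) (f : 'I_N -> nat) (a0 : nat) :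
  mod_profile p c f a0 -> #|off_class p f a0| = (N - c.+1)%N.
Proof.
move=> prof; have -> : off_class p f a0 = ~: [set x | (f x == a0 %[mod p])%N].
  by apply/setP => x; rewrite !inE.
by have := cardsC [set x | (f x == a0 %[mod p])%N]; rewrite prof eqxx /= muln1 card_ord; set X := #|_|; lia.
Qed.

(* Let f3 = f1 + f2 modulo pq, with joint profiles (a_l, b_l) and
   a3 = a1 + a2 modulo p.  An index outside the exceptional class of f1 but
   inside that of f2 modulo p has f1 = b1 and f3 = b3 modulo q, hence
   f2 = b3 - b1 modulo q: f2 is constant modulo p and modulo q there, so the
   joint profile of f2 allows at most two such indices. *)
Lemma off_class_leave (p q N : nat) (f1 f2 f3 : 'I_N -> nat) (a1 a2 a3 b1 b2 b3 : nat) :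
  (forall x, f3 x == f1 x + f2 x %[mod p])%N -> (forall x, f3 x == f1 x + f2 x %[mod q])%N ->
  (a3 == a1 + a2 %[mod p])%N ->
  crt_profile p q f1 a1 b1 -> crt_profile p q f2 a2 b2 -> crt_profile p q f3 a3 b3 ->
  (#|off_class p f1 a1 :\: off_class p f2 a2| <= 2)%N.
Proof.
move=> add_p add_q a3_add prof1 prof2 prof3.
have f2_class y : y \in off_class p f1 a1 :\: off_class p f2 a2 ->
    (f2 y == a2 %[mod p])%N && (f2 y + b1 == b3 %[mod q])%N.
  rewrite !inE negbK => /andP [y_in2 y_off1]; rewrite y_in2 /=.
  have /orP [|/eqP f1_b1] := crt_profile_cover prof1 y; first by rewrite (negbTE y_off1).
  have y_off3 : ~~ (f3 y == a3 %[mod p])%N.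
    apply: contra y_off1; rewrite (eqP (add_p y)) (eqP a3_add) => /eqP sum_eq.
    by rewrite -(eqn_modDr a2) -sum_eq -modnDmr -(eqP y_in2) modnDmr.
  have /orP [|/eqP f3_b3] := crt_profile_cover prof3 y; first by rewrite (negbTE y_off3).
  by apply/eqP; rewrite -f3_b3 (eqP (add_q y)) -[RHS]modnDml f1_b1 modnDml addnC.
case: (set_0Vmem (off_class p f1 a1 :\: off_class p f2 a2)) => [->|[x0 x0_in]].
  by rewrite cards0.
have /andP [_ x0_q] := f2_class x0 x0_in.
have sub : off_class p f1 a1 :\: off_class p f2 a2 \subset
    [set y | (f2 y == a2 %[mod p]) && (f2 y == f2 x0 %[mod q])].
  apply/subsetP => y y_in; have /andP [y_p y_q] := f2_class y y_in.
  by rewrite inE y_p /= -(eqn_modDr b1) (eqP y_q) (eqP x0_q).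
apply: leq_trans (subset_leq_card sub) _.
by rewrite prof2 eqxx; case: (f2 x0 == b2 %[mod q])%N.
Qed.

Lemma val_Zp_add (n : nat) (u v : 'Z_n) : (1 < n)%N ->
  nat_of_ord (u + v)%R = ((u + v) %% n)%N.
Proof.
move=> n1; change ((((u : nat) + v) %% (Zp_trunc n).+2 = (u + v) %% n)%N).
by move: (u : nat) (v : nat) => a b; rewrite Zp_cast.
Qed.

Lemma val_Zp_mul_dvd (n d : nat) (w : 'Z_n) : (1 < n)%N -> (d %| n)%N ->
  (nat_of_ord (d%:R * w)%R %% d = 0)%N.
Proof.
move=> n1 dn; change (((d%:R : 'Z_n) : nat) * w %% (Zp_trunc n).+2 %% d = 0)%N.
rewrite val_Zp_nat //; move: (w : nat) => m; rewrite Zp_cast // modn_dvdm //.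
rewrite -modnMml modn_dvdm //.
by rewrite modnn mul0n mod0n.
Qed.

Lemma coset_multiples_mod (n d : nat) (u r : 'Z_n) : (1 < n)%N -> (d %| n)%N ->
  u \in [set r + x | x in multiples n d] -> (nat_of_ord u == r %[mod d])%N.
Proof.
move=> n1 dn /imsetP [y /imsetP [w _ ->] ->].
by rewrite val_Zp_add // modn_dvdm // -modnDmr val_Zp_mul_dvd // addn0.
Qed.

Lemma Ldiff_add (n N : nat) (M : 'M['Z_n]_N) (i j k x : 'I_N) : (1 < n)%N ->
  nat_of_ord (Ldiff M i k x) = ((Ldiff M i j x + Ldiff M j k x) %% n)%N.
Proof. by move=> n1; rewrite -val_Zp_add // /Ldiff; congr nat_of_ord; ring. Qed.

(* Orthogonality of rows a and b: the roots of unity z^(L_ab(x)) sum to 0,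
   since z^(m_bx) conj(z^(m_ax)) = z^(L_ab(x)) |z^(m_ax)|^2 and |z| = 1. *)
Lemma Ldiff_vanishing (n N : nat) (z : algC) (M : 'M['Z_n]_N) (a b : 'I_N) :
  (1 < n)%N -> n.-primitive_root z -> hadamard_log z M -> a != b ->
  \sum_(x < N) z ^+ (Ldiff M a b x) = 0.
Proof.
move=> n1 hz hM ab.
have z_unit : `|z| = 1.
  apply/eqP; rewrite -(@pexpr_eq1 _ _ n) ?normr_ge0 //; last by lia.
  by rewrite -normrX (prim_expr_order hz) normr1.
rewrite -[RHS](hM b a); last by rewrite eq_sym.
apply: eq_bigr => x _; have -> : M b x = Ldiff M a b x + M a x by rewrite /Ldiff subrK.
rewrite val_Zp_add // (prim_expr_mod hz) exprD -mulrA -normCK normrX.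
by rewrite z_unit !expr1n mulr1.
Qed.

(* Q_ab ∪ R_ab consists of q + 1 indices congruent to r modulo p, so r lies in
   the exceptional class of the mod-p profile of L_ab; every index outside that
   class therefore lies in P_ab. *)
Lemma off_class_sub_P (p q : nat) (M : 'M['Z_(p * q)]_(p + q)) (a b : 'I_(p + q))
    (P Q R : {set 'I_(p + q)}) (r : 'Z_(p * q)) (a0 : nat) :
  (1 < p)%N -> (1 < q)%N -> mod_profile p q (fun x => nat_of_ord (Ldiff M a b x)) a0 ->
  PQR_partition M a b P Q R r ->
  off_class p (fun x => nat_of_ord (Ldiff M a b x)) a0 \subset P.
Proof.
move=> p1 q1 prof [[cover [_ [_ dQR]]] [[cR HR] [_ [cQ HQ]]]].
have n1 : (1 < p * q)%N by nia.
have QR_r : Q :|: R \subset [set x | nat_of_ord (Ldiff M a b x) == r %[mod p]].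
  apply/subsetP => x; rewrite !inE => /orP [xQ|/HR ->//].
  have : Ldiff M a b x \in [set Ldiff M a b k | k in Q] by apply: imset_f.
  by rewrite HQ => /setD1P [_]; apply: coset_multiples_mod; rewrite ?dvdn_mulr.
have r_a0 : (r == a0 %[mod p])%N.
  have := subset_leq_card QR_r; rewrite prof cardsU (disjoint_setI0 dQR) cards0 cQ cR.
  by case: (r == a0 %[mod p])%N => //=; lia.
apply/subsetP => x; rewrite inE => x_off.
have : x \in P :|: Q :|: R by rewrite cover inE.
rewrite -setUA inE => /orP [//|/(subsetP QR_r)]; rewrite inE => /eqP x_r.
by move: x_off; rewrite x_r r_a0.
Qed.

Theorem lemma6p4 (p q : nat) (hp : prime p) (hq : prime q) (hpq : p != q)
    (hp5 : (5 <= p)%N) (z : algC) (hz : (p * q)%N.-primitive_root z)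
    (M : 'M['Z_(p * q)]_(p + q)) (hM : hadamard_log z M)
    (i j k : 'I_(p + q)) (hij : i != j) (hjk : j != k) (hik : i != k)
    (Pij Qij Rij : {set 'I_(p + q)}) (rij : 'Z_(p * q))
    (Pjk Qjk Rjk : {set 'I_(p + q)}) (rjk : 'Z_(p * q))
    (hPij : PQR_partition M i j Pij Qij Rij rij)
    (hPjk : PQR_partition M j k Pjk Qjk Rjk rjk) :
  (2 <= #|Pij :&: Pjk|)%N.
Proof.
have p1 := prime_gt1 hp; have q1 := prime_gt1 hq; have n1 : (1 < p * q)%N by nia.
pose f a b x := nat_of_ord (Ldiff M a b x).
have profile a b : a != b -> exists a0 b0, mod_profile p q (f a b) a0 /\ crt_profile p q (f a b) a0 b0.
  by move=> ab; apply: vanishing_profile hp hq hpq erefl hz (Ldiff_vanishing n1 hz hM ab).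
have [a1 [b1 [Hp1 Hq1]]] := profile i j hij.
have [a2 [b2 [Hp2 Hq2]]] := profile j k hjk.
have [a3 [b3 [Hp3 Hq3]]] := profile i k hik.
have add d : (d %| p * q)%N -> forall x, (f i k x == f i j x + f j k x %[mod d])%N.
  by move=> dn x; rewrite /f (@Ldiff_add _ _ M i j k x n1) modn_dvdm.
have cpq : coprime p q by rewrite prime_coprime // dvdn_prime2.
have a3_add := exceptional_class_add hp (leq_trans (isT : 2 < 5)%N hp5) cpq
  (add p (dvdn_mulr _ (dvdnn p))) Hp1 Hp2 Hp3.
have leave := off_class_leave (add p (dvdn_mulr _ (dvdnn p)))
  (add q (dvdn_mull _ (dvdnn q))) a3_add Hq1 Hq2 Hq3.
have sub : off_class p (f i j) a1 :&: off_class p (f j k) a2 \subset Pij :&: Pjk.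
  by apply: setISS; [exact: off_class_sub_P hPij | exact: off_class_sub_P hPjk].
apply: leq_trans (subset_leq_card sub).
have := cardsID (off_class p (f j k) a2) (off_class p (f i j) a1).
by rewrite (card_off_class Hp1); lia.
Qed.
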